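(* In the graph $\Gamma_n$, a set of edges $\{(A_1,i_1),(A_2,i_2),\dots,(A_n,i_n)\}$ is ample if $i_1,i_2,\dots,i_n$ are pairwise distinct.
   Context: $\Gamma_n$ is the directed graph whose vertices are all subsets of $\{1,\dots,n\}$ and whose edges are the pairs $(A,i)$ with $A\subseteq\{1,\dots,n\}$, $i\notin A$; the edge $(A,i)$ has tail $A\cup\{i\}$ and head $A$. A directed path is a sequence of edges $e_1,\dots,e_k$ with the head of $e_i$ equal to the tail of $e_{i+1}$; each vertex is joined to itself by the path of length $0$. A source is a vertex that is the head of no edge, a sink a vertex that is the tail of no edge (here the unique source is $\{1,\dots,n\}$ and the unique sink is $\emptyset$). A set $W$ of vertices is ample if (1) for every non-sink vertex $v$ there is $u\in W$ such that there is no directed path from $u$ to $v$, and (2) for every non-source vertex $v$ there is $w\in W$ such that there is no directed path from $v$ to $w$. A set of edges is ample if the set of all their heads and tails is ample. *)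

From mathcomp Require Import all_boot.
Set Implicit Arguments. Unset Strict Implicit. Unset Printing Implicit Defensive.

(* Gamma_n: vertices are subsets of 'I_n (= {1..n} reindexed as {0..n-1}).
   An edge is a pair (A, i) with i \notin A; tail = A :|: [set i], head = A. *)
Definition vertex (n : nat) := {set 'I_n}.

Definition is_edge (n : nat) (e : {set 'I_n} * 'I_n) : bool := e.2 \notin e.1.
Definition head (n : nat) (e : {set 'I_n} * 'I_n) : {set 'I_n} := e.1.
Definition tail (n : nat) (e : {set 'I_n} * 'I_n) : {set 'I_n} := e.2 |: e.1.

Definition step (n : nat) : rel {set 'I_n} :=
  fun u v => [exists i : 'I_n, is_edge (v, i) && (tail (v, i) == u)].

Definition dpath (n : nat) (u v : {set 'I_n}) : bool := connect (@step n) u v.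

Definition is_source (n : nat) (v : {set 'I_n}) : bool :=
  [forall e : {set 'I_n} * 'I_n, is_edge e ==> (head e != v)].
Definition is_sink (n : nat) (v : {set 'I_n}) : bool :=
  [forall e : {set 'I_n} * 'I_n, is_edge e ==> (tail e != v)].

Definition ample_vertices (n : nat) (W : {set {set 'I_n}}) : Prop :=
  (forall v : {set 'I_n}, ~~ is_sink v -> exists2 u, u \in W & ~~ dpath u v) /\
  (forall v : {set 'I_n}, ~~ is_source v -> exists2 w, w \in W & ~~ dpath v w).

Definition endpoints (n : nat) (E : {set {set 'I_n} * 'I_n}) : {set {set 'I_n}} :=
  [set head e | e in E] :|: [set tail e | e in E].

Definition ample_edges (n : nat) (E : {set {set 'I_n} * 'I_n}) : Prop :=
  ample_vertices (endpoints E).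

From Pilot Require Import Defs.
From mathcomp Require Import all_boot.

(* Every edge removes one element, so a directed path can only shrink its
   vertex.  If every label j occurs on some edge (A, j) of E, then a non-sink v
   contains some j and cannot be reached from the head A, which misses j; dually
   a non-source v misses some j and cannot reach the tail j |: A.  Distinct
   labels i_1, ..., i_n exhaust all n labels. *)

Section Gamma.

Variable n : nat.
Implicit Types (u v : {set 'I_n}) (e : {set 'I_n} * 'I_n) (E : {set {set 'I_n} * 'I_n}).

Lemma dpath_subset u v : dpath u v -> v \subset u.
Proof.
case/connectP=> p + -> {v}; elim: p u => [|w p IHp] u /=; first by rewrite subxx.
case/andP=> /existsP [j /andP [_ /eqP <-]] /IHp w_sub.
by apply: subset_trans w_sub _; rewrite subsetUr.
Qed.

Lemma notin_dpath u v j : j \notin u -> j \in v -> ~~ dpath u v.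
Proof. by move=> ju jv; apply/negP=> /dpath_subset /subsetP /(_ j jv); apply/negP. Qed.

Lemma non_sink_mem v : ~~ is_sink v -> exists j, j \in v.
Proof.
case/forallPn=> -[B j]; rewrite negb_imply negbK => /andP [_ /eqP <-].
by exists j; rewrite /tail setU11.
Qed.

Lemma non_source_notin v : ~~ is_source v -> exists j, j \notin v.
Proof.
case/forallPn=> -[B j]; rewrite negb_imply negbK => /andP [jB /eqP <-].
by exists j.
Qed.

Lemma head_endpoints E e : e \in E -> Defs.head e \in endpoints E.
Proof. by move=> eE; rewrite inE imset_f. Qed.

Lemma tail_endpoints E e : e \in E -> tail e \in endpoints E.
Proof. by move=> eE; rewrite inE imset_f ?orbT. Qed.

Lemma ample_edges_all_labels E :
  {in E, forall e, is_edge e} -> (forall j, exists2 e, e \in E & e.2 = j) ->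
  ample_edges E.
Proof.
move=> E_edge E_labels; split=> v.
- case/non_sink_mem=> j; have [e eE <-] := E_labels j => ev.
  by exists (Defs.head e); [exact: head_endpoints | exact: notin_dpath (E_edge e eE) ev].
- case/non_source_notin=> j; have [e eE <-] := E_labels j => ev.
  by exists (tail e); [exact: tail_endpoints | apply: notin_dpath ev _; rewrite setU11].
Qed.

End Gamma.

Theorem proposition3p2p3 (n : nat) (A : 'I_n -> {set 'I_n}) (i : 'I_n -> 'I_n) :
  (forall k, is_edge (A k, i k)) ->
  injective i ->
  ample_edges [set (A k, i k) | k : 'I_n].
Proof.
move=> A_edge i_inj; apply: ample_edges_all_labels.
  by move=> _ /imsetP [k _ ->].
move=> j; have /codomP [k ->] : j \in codom i by apply: inj_card_onto.
by exists (A k, i k); rewrite ?imset_f.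
Qed.
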